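(* Let $(G,\mathcal{C})$ be CER with respect to the ordering $(V_{\eta_1},\dots,V_{\eta_r})$. If $\{v,w\},\{v',w'\}\in\tilde E$ satisfy $c(v,w)=c(v',w')=k\in[r+R]\setminus F$, $\pi(v)\le\pi(w)$ and $\pi(v')\le\pi(w')$, then $c(v)=c(v')$.
   Context: $G=(V,E)$ finite simple undirected graph, $V=[p]$; coloring: vertex color classes $V_1,\dots,V_r$, edge color classes $E_{r+1},\dots,E_{r+R}$ partitioning $E$. $\tilde E=E\cup\{\{v\}:v\in V\}$, $E_i=\{\{v\}:v\in V_i\}$; $c(v,w)=k$ iff $\{v,w\}\in E_k$, $c(v)=c(v,v)$. $\pi(v)=i$ iff $v\in V_{\eta_i}$; $V_{\le i}=V_{\eta_1}\cup\dots\cup V_{\eta_i}$. $m_{v\to w}(k,h)=|\{u\in V_{\le\min(\pi(v),\pi(w))}: c(v,u)=k, c(u,w)=h\}|$, $m_{v\leftrightarrow w}(k,h)=m_{v\to w}(k,h)+m_{v\to w}(h,k)$. $F_i=\{c(v,w):\{v,w\}\in\tilde E,\ c(v)=c(w)=i\}$, $F=\bigcup_iF_i$. The ordering is a cpeo if every $v\in V_{\eta_i}$ is simplicial (neighbours form a clique) in $G[V_{\eta_i}\cup\dots\cup V_{\eta_r}]$. CER with respect to the ordering: cpeo and (M1): $c(v,w)=c(v',w')$ implies $m_{v\leftrightarrow w}=m_{v'\leftrightarrow w'}$. *)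

From mathcomp Require Import all_boot all_fingroup.
Set Implicit Arguments. Unset Strict Implicit. Unset Printing Implicit Defensive.

(* A coloured simple graph on V = 'I_p with r vertex colours 1..r and
   R edge colours r+1..r+R.
   - E : adjacency relation (symmetric, irreflexive);
   - vcol v : 'I_r  -- vertex v lies in V_(vcol v + 1);
   - ecol v w : 'I_R -- the edge {v,w} lies in E_(r + 1 + ecol v w)
     (only meaningful when E v w; must be symmetric on edges).
   Colour classes of a partition are nonempty. *)
Definition colored_graph (p r R : nat) (E : rel 'I_p)
  (vcol : 'I_p -> 'I_r) (ecol : 'I_p -> 'I_p -> 'I_R) : Prop :=
  [/\ symmetric E, irreflexive E,
      (forall v w, E v w -> ecol v w = ecol w v),
      (forall i : 'I_r, exists v, vcol v = i) &
      (forall j : 'I_R, exists v w, E v w /\ ecol v w = j)].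

Definition in_Etilde p (E : rel 'I_p) (v w : 'I_p) : bool := (v == w) || E v w.

(* the colour c(v,w) in [r+R] of {v,w} in E~; 0 (not a colour) otherwise *)
Definition col p r R (E : rel 'I_p) (vcol : 'I_p -> 'I_r)
  (ecol : 'I_p -> 'I_p -> 'I_R) (v w : 'I_p) : nat :=
  if v == w then (vcol v).+1
  else if E v w then r + (ecol v w).+1 else 0.

(* eta : position i |-> colour eta i (the ordering (V_eta_1,...,V_eta_r));
   pi v = position of the colour class of v, i.e. pi v = i iff v in V_(eta i) *)
Definition pos p r (eta : {perm 'I_r}) (vcol : 'I_p -> 'I_r) (v : 'I_p) : 'I_r :=
  (eta^-1)%g (vcol v).

Definition mto (p r R : nat) (E : rel 'I_p) (vcol : 'I_p -> 'I_r) (ecol : 'I_p -> 'I_p -> 'I_R) (eta : {perm 'I_r}) (v w : 'I_p) (k h : nat) : nat :=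
  #|[set u : 'I_p | (pos eta vcol u <= minn (pos eta vcol v) (pos eta vcol w))
                    && (col E vcol ecol v u == k) && (col E vcol ecol u w == h)]|.

Definition mboth (p r R : nat) (E : rel 'I_p) (vcol : 'I_p -> 'I_r) (ecol : 'I_p -> 'I_p -> 'I_R) (eta : {perm 'I_r}) (v w : 'I_p) (k h : nat) : nat :=
  mto E vcol ecol eta v w k h + mto E vcol ecol eta v w h k.

Definition inF (p r R : nat) (E : rel 'I_p) (vcol : 'I_p -> 'I_r) (ecol : 'I_p -> 'I_p -> 'I_R) (k : nat) : Prop :=
  exists v w : 'I_p, [/\ in_Etilde E v w, vcol v = vcol w &
                          col E vcol ecol v w = k].

Definition cpeo p r (E : rel 'I_p) (vcol : 'I_p -> 'I_r) (eta : {perm 'I_r}) : Prop :=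
  forall v x y : 'I_p,
    pos eta vcol v <= pos eta vcol x -> pos eta vcol v <= pos eta vcol y ->
    E v x -> E v y -> x != y -> E x y.

Definition M1 (p r R : nat) (E : rel 'I_p) (vcol : 'I_p -> 'I_r) (ecol : 'I_p -> 'I_p -> 'I_R) (eta : {perm 'I_r}) : Prop :=
  forall v w v' w' : 'I_p, in_Etilde E v w -> in_Etilde E v' w' ->
    col E vcol ecol v w = col E vcol ecol v' w' ->
    forall k h, 1 <= k <= r + R -> 1 <= h <= r + R ->
      mboth E vcol ecol eta v w k h = mboth E vcol ecol eta v' w' k h.

Definition CER (p r R : nat) (E : rel 'I_p) (vcol : 'I_p -> 'I_r) (ecol : 'I_p -> 'I_p -> 'I_R) (eta : {perm 'I_r}) : Prop :=
  cpeo E vcol eta /\ M1 E vcol ecol eta.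

(* Let i = c(v).  The vertex u = v witnesses m_{v->w}(i,k) > 0, so by (M1)
   m_{v'<->w'}(i,k) > 0.  A path of colours (i,k) or (k,i) through u can only
   use the vertex colour i on a loop, so either u = v' and c(v') = i, or
   u = w' with pi(w') <= pi(v').  Since k is not in F, c(v') <> c(w'), hence
   pi(v') < pi(w') and the second case is impossible. *)
From mathcomp Require Import all_boot all_fingroup.
From mathcomp Require Import zify.

Section VertexColours.

Variables (p r R : nat) (E : rel 'I_p) (vcol : 'I_p -> 'I_r).
Variables (ecol : 'I_p -> 'I_p -> 'I_R) (eta : {perm 'I_r}).

Local Notation c := (col E vcol ecol).
Local Notation pi := (pos eta vcol).
Local Notation mto := (mto E vcol ecol eta).

Lemma col_diag (v : 'I_p) : c v v = (vcol v).+1.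
Proof. by rewrite /col eqxx. Qed.

Lemma col_diag_range (v : 'I_p) : 1 <= c v v <= r + R.
Proof. by rewrite col_diag /= (leq_trans (ltn_ord _) (leq_addr _ _)). Qed.

Lemma col_eq_vertex_colour (v w x : 'I_p) :
  c v w = (vcol x).+1 -> v = w /\ vcol v = vcol x.
Proof.
rewrite /col; case: eqP => [-> /succn_inj/val_inj -> // | _].
by case: (E v w) => // /eqP; have := ltn_ord (vcol x); lia.
Qed.

Lemma pos_eq (v w : 'I_p) : (pi v == pi w :> nat) = (vcol v == vcol w).
Proof. by rewrite val_eqE (inj_eq (@perm_inj _ _)). Qed.

Lemma vcol_neq_notin_F (v w : 'I_p) :
  in_Etilde E v w -> ~ inF E vcol ecol (c v w) -> vcol v != vcol w.
Proof. by move=> vw notF; apply/eqP => same; apply: notF; exists v, w. Qed.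

Lemma mto_self_gt0 (v w : 'I_p) : pi v <= pi w -> 0 < mto v w (c v v) (c v w).
Proof.
by move=> le_vw; apply/card_gt0P; exists v; rewrite inE leq_min leqnn le_vw !eqxx.
Qed.

Lemma mto_vertex_colour_left (v w x : 'I_p) h :
  0 < mto v w (vcol x).+1 h -> vcol v = vcol x.
Proof.
by case/card_gt0P => u; rewrite inE => /andP[/andP[_ /eqP/col_eq_vertex_colour[]]].
Qed.

Lemma mto_vertex_colour_right (v w x : 'I_p) k :
  0 < mto v w k (vcol x).+1 -> pi w <= pi v.
Proof.
case/card_gt0P => u; rewrite inE => /andP[/andP[le_u _]].
by case/eqP/col_eq_vertex_colour => <- _; move: le_u; rewrite leq_min => /andP[].
Qed.

End VertexColours.

Theorem lemma7p7 (p r R : nat) (E : rel 'I_p) (vcol : 'I_p -> 'I_r)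
  (ecol : 'I_p -> 'I_p -> 'I_R) (eta : {perm 'I_r}) :
  colored_graph E vcol ecol ->
  CER E vcol ecol eta ->
  forall (v w v' w' : 'I_p) (k : nat),
    in_Etilde E v w -> in_Etilde E v' w' ->
    col E vcol ecol v w = k -> col E vcol ecol v' w' = k ->
    1 <= k <= r + R -> ~ inF E vcol ecol k ->
    pos eta vcol v <= pos eta vcol w -> pos eta vcol v' <= pos eta vcol w' ->
    col E vcol ecol v v = col E vcol ecol v' v'.
Proof.
move=> _ [_ hM1] v w v' w' k vw v'w' <- ck' k_range notF le_vw le_v'w'.
have lt_v'w' : pos eta vcol v' < pos eta vcol w'.
  rewrite ltn_neqAle le_v'w' andbT pos_eq.
  by apply: (@vcol_neq_notin_F _ _ _ _ _ ecol _ _ v'w'); rewrite ck'.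
have : 0 < mboth E vcol ecol eta v w (col E vcol ecol v v) (col E vcol ecol v w).
  by rewrite /mboth ltn_addr // mto_self_gt0.
rewrite (hM1 v w v' w') ?ck' ?col_diag_range // col_diag /mboth addn_gt0.
case/orP => [/mto_vertex_colour_left | /mto_vertex_colour_right le_w'v'].
  by rewrite !col_diag => ->.
by have := leq_trans lt_v'w' le_w'v'; rewrite ltnn.
Qed.
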